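(* Let $ABC$ be a triangle and let $O$ be a point in its interior. Let $\alpha=d_A/h_A$, $\beta=d_B/h_B$ and $\gamma=d_C/h_C$, where $d_A,d_B,d_C$ are the distances from $O$ to the lines $BC,CA,AB$ and $h_A,h_B,h_C$ are the corresponding altitudes of the triangle. Thus $\alpha+\beta+\gamma=1$. Let $D$ be the intersection of line $CO$ with side $AB$. For a point $t$ on segment $AD$, let $F(t)$ be the second intersection of the line $tO$ with the boundary of the triangle; this point lies on side $BC$. Then $$\alpha\,\frac{tA}{tB}+\gamma\,\frac{F(t)C}{F(t)B}=\beta,$$ where $XY$ denotes the length of the segment $XY$. *)

From Stdlib Require Import Reals.
Open Scope R_scope.

Definition point : Type := (R * R)%type.

Definition pdist (X Y : point) : R :=
  sqrt ((fst X - fst Y) ^ 2 + (snd X - snd Y) ^ 2).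

(* cross product of (Q - P) and (X - P): twice the signed area of PQX *)
Definition cross (P Q X : point) : R :=
  (fst Q - fst P) * (snd X - snd P) - (snd Q - snd P) * (fst X - fst P).

Definition collinear (P Q X : point) : Prop := cross P Q X = 0.

Definition dist_line (X P Q : point) : R := Rabs (cross P Q X) / pdist P Q.

Definition on_segment (X P Q : point) : Prop :=
  exists s : R, 0 <= s <= 1 /\
    X = ((1 - s) * fst P + s * fst Q, (1 - s) * snd P + s * snd Q).

Definition in_interior (O A B C : point) : Prop :=
  exists a b c : R, 0 < a /\ 0 < b /\ 0 < c /\ a + b + c = 1 /\
    O = (a * fst A + b * fst B + c * fst C, a * snd A + b * snd B + c * snd C).

(* In barycentric coordinates O = aA + bB + cC the ratios alpha, beta, gamma
   are exactly a, b, c.  Parametrise t = (1-u)A + uB and F = (1-v)B + vC;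
   then tA/tB = u/(1-u), FC/FB = (1-v)/v, and collinearity of t, O, F is the
   single relation (1-u)(bv - c(1-v)) = auv, which after division by (1-u)v
   is the claimed identity.  A solution v in (0, 1] exists as long as t stays
   on AD, i.e. u(a+b) <= b. *)
From Stdlib Require Import Reals Lra.
Open Scope R_scope.

Definition lerp (P Q : point) (s : R) : point :=
  ((1 - s) * fst P + s * fst Q, (1 - s) * snd P + s * snd Q).

Definition bary (a b c : R) (A B C : point) : point :=
  (a * fst A + b * fst B + c * fst C, a * snd A + b * snd B + c * snd C).

Lemma lerp_sym (P Q : point) (s : R) : lerp P Q s = lerp Q P (1 - s).
Proof. unfold lerp; f_equal; ring. Qed.

Lemma lerp_lerp (P Q : point) (r s : R) : lerp P (lerp P Q s) r = lerp P Q (r * s).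
Proof. unfold lerp; simpl; f_equal; ring. Qed.

Lemma bary_cycle (a b c : R) (A B C : point) : bary a b c A B C = bary b c a B C A.
Proof. unfold bary; f_equal; ring. Qed.

Lemma cross_cycle (A B C : point) : cross B C A = cross A B C.
Proof. unfold cross; ring. Qed.

Lemma pdist_sym (P Q : point) : pdist P Q = pdist Q P.
Proof. unfold pdist; f_equal; ring. Qed.

Lemma pdist_scale (X Y P Q : point) (k : R) :
  fst X - fst Y = k * (fst Q - fst P) -> snd X - snd Y = k * (snd Q - snd P) ->
  pdist X Y = Rabs k * pdist P Q.
Proof.
  intros Hx Hy. unfold pdist. rewrite Hx, Hy.
  replace ((k * (fst Q - fst P)) ^ 2 + (k * (snd Q - snd P)) ^ 2)
    with (k ^ 2 * ((fst P - fst Q) ^ 2 + (snd P - snd Q) ^ 2)) by ring.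
  rewrite sqrt_mult_alt by apply pow2_ge_0.
  rewrite <- (pow2_abs k), sqrt_pow2 by apply Rabs_pos. reflexivity.
Qed.

Lemma pdist_neq0_of_cross (P Q X : point) : cross P Q X <> 0 -> pdist P Q <> 0.
Proof.
  intros Hcross Hdist. apply Hcross. unfold pdist in Hdist.
  pose proof (pow2_ge_0 (fst P - fst Q)). pose proof (pow2_ge_0 (snd P - snd Q)).
  apply sqrt_eq_0 in Hdist; [| lra].
  assert (Hx : fst Q - fst P = 0) by nra.
  assert (Hy : snd Q - snd P = 0) by nra.
  unfold cross. rewrite Hx, Hy. ring.
Qed.

Lemma pdist_lerp_ratio (P Q : point) (s : R) :
  0 <= s < 1 -> pdist P Q <> 0 ->
  pdist (lerp P Q s) P / pdist (lerp P Q s) Q = s / (1 - s).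
Proof.
  intros Hs HPQ.
  rewrite (pdist_scale (lerp P Q s) P P Q s) by (simpl; ring).
  rewrite (pdist_scale (lerp P Q s) Q P Q (s - 1)) by (simpl; ring).
  rewrite Rabs_pos_eq, Rabs_left1 by lra.
  field. split; lra.
Qed.

Lemma dist_line_ratio (X Y P Q : point) (k : R) :
  cross P Q X = k * cross P Q Y -> 0 <= k -> cross P Q Y <> 0 ->
  dist_line X P Q / dist_line Y P Q = k.
Proof.
  intros HX Hk HY. unfold dist_line.
  rewrite HX, Rabs_mult, (Rabs_pos_eq k) by exact Hk.
  field. split; [exact (pdist_neq0_of_cross P Q Y HY) | apply Rabs_no_R0, HY].
Qed.

Lemma bary_dist_line_ratio (a b c : R) (A B C : point) :
  a + b + c = 1 -> 0 <= a -> cross A B C <> 0 ->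
  dist_line (bary a b c A B C) B C / dist_line A B C = a.
Proof.
  intros Habc Ha HK. apply dist_line_ratio; [| exact Ha | now rewrite cross_cycle].
  replace c with (1 - a - b) by lra. unfold cross, bary; simpl. ring.
Qed.

Lemma bary_dist_line_ratios (a b c : R) (A B C : point) :
  a + b + c = 1 -> 0 <= a -> 0 <= b -> 0 <= c -> cross A B C <> 0 ->
  dist_line (bary a b c A B C) B C / dist_line A B C = a /\
  dist_line (bary a b c A B C) C A / dist_line B C A = b /\
  dist_line (bary a b c A B C) A B / dist_line C A B = c.
Proof.
  intros Habc Ha Hb Hc HK. split; [| split].
  - apply bary_dist_line_ratio; assumption.
  - rewrite bary_cycle. apply bary_dist_line_ratio; [lra | exact Hb |].
    now rewrite cross_cycle.
  - rewrite <- (bary_cycle c a b). apply bary_dist_line_ratio; [lra | exact Hc |].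
    now rewrite 2!cross_cycle.
Qed.

Lemma cevian_foot (a b c s : R) (A B C : point) :
  a + b + c = 1 -> cross A B C <> 0 ->
  collinear C (bary a b c A B C) (lerp A B s) -> s * (a + b) = b.
Proof.
  intros Habc HK Hcol.
  assert (Hfactor : (s * (a + b) - b) * cross A B C = 0).
  { rewrite <- Hcol. replace c with (1 - a - b) by lra.
    unfold cross, bary, lerp; simpl. ring. }
  apply Rmult_integral in Hfactor. destruct Hfactor; [lra | contradiction].
Qed.

Lemma cross_transversal (a b c u v : R) (A B C : point) :
  a + b + c = 1 ->
  cross (lerp A B u) (bary a b c A B C) (lerp B C v)
  = ((1 - u) * (b * v - c * (1 - v)) - a * u * v) * cross A B C.
Proof.
  intros Habc. replace c with (1 - a - b) by lra.
  unfold cross, bary, lerp; simpl. ring.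
Qed.

Lemma cevian_subsegment_param (a b r s : R) :
  0 < a -> 0 < b -> 0 <= r <= 1 -> s * (a + b) = b ->
  0 <= r * s < 1 /\ r * s * (a + b) <= b.
Proof.
  intros Ha Hb Hr Hfoot.
  assert (Hs : 0 <= s).
  { apply (Rmult_le_reg_r (a + b)); [lra |]. rewrite Rmult_0_l. lra. }
  assert (Hub : r * s * (a + b) <= b).
  { rewrite Rmult_assoc, Hfoot.
    assert (0 <= (1 - r) * b) by (apply Rmult_le_pos; lra). lra. }
  split; [split |].
  - apply Rmult_le_pos; lra.
  - assert (Hpos : 0 * (a + b) < (1 - r * s) * (a + b)) by lra.
    apply Rmult_lt_reg_r in Hpos; lra.
  - exact Hub.
Qed.

Lemma transversal_solution (a b c u : R) :
  0 < a -> 0 < b -> 0 < c -> a + b + c = 1 -> 0 <= u -> u * (a + b) <= b ->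
  let v := c * (1 - u) / (b + c - u) in
  0 <= v <= 1 /\ (1 - u) * (b * v - c * (1 - v)) - a * u * v = 0.
Proof.
  intros Ha Hb Hc Habc Hu0 Hu v.
  assert (Hcu : c * u = u - u * (a + b)) by (replace c with (1 - a - b) by lra; ring).
  assert (Hden : 0 < b + c - u).
  { assert (Hprod : (b + c - u) * (a + b) = c * a + (b - u * (a + b)))
      by (replace c with (1 - a - b) by lra; ring).
    assert (0 < c * a) by (apply Rmult_lt_0_compat; lra).
    nra. }
  assert (Hu1 : u < 1) by lra.
  unfold v. split; [split |].
  - apply Rmult_le_pos; [apply Rmult_le_pos; lra | left; apply Rinv_0_lt_compat, Hden].
  - apply Rmult_le_reg_r with (b + c - u); [exact Hden |].
    unfold Rdiv. rewrite Rmult_assoc, Rinv_l by lra. lra.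
  - field_simplify; [| lra]. replace a with (1 - b - c) by lra. field_simplify; lra.
Qed.

Lemma transversal_ratio_identity (a b c u v : R) :
  0 <= u < 1 -> 0 < v ->
  (1 - u) * (b * v - c * (1 - v)) - a * u * v = 0 ->
  a * (u / (1 - u)) + c * ((1 - v) / v) = b.
Proof.
  intros Hu Hv Hcol.
  replace b with ((a * u * v + c * (1 - u) * (1 - v)) / ((1 - u) * v))
    by (field_simplify_eq; [lra | split; lra]).
  field. split; lra.
Qed.

Lemma transversal_meets_side (a b c u : R) (A B C : point) :
  0 < a -> 0 < b -> 0 < c -> a + b + c = 1 -> 0 <= u -> u * (a + b) <= b ->
  exists F, on_segment F B C /\ collinear (lerp A B u) (bary a b c A B C) F.
Proof.
  intros Ha Hb Hc Habc Hu0 Hu.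
  destruct (transversal_solution a b c u Ha Hb Hc Habc Hu0 Hu) as [Hv Hcol].
  exists (lerp B C (c * (1 - u) / (b + c - u))).
  split; [now exists (c * (1 - u) / (b + c - u)) |].
  unfold collinear. rewrite cross_transversal, Hcol by exact Habc. ring.
Qed.

Lemma transversal_ratio_sum (a b c u : R) (A B C F : point) :
  0 < c -> a + b + c = 1 -> cross A B C <> 0 -> 0 <= u < 1 ->
  on_segment F B C -> collinear (lerp A B u) (bary a b c A B C) F ->
  a * (pdist (lerp A B u) A / pdist (lerp A B u) B) + c * (pdist F C / pdist F B) = b.
Proof.
  intros Hc Habc HK Hu (v & Hv & HFe) HcolF. change (F = lerp B C v) in HFe. subst F.
  unfold collinear in HcolF. rewrite cross_transversal in HcolF by exact Habc.
  apply Rmult_integral in HcolF. destruct HcolF as [Hcol | Hdeg]; [| contradiction].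
  assert (Hv0 : v <> 0).
  { intros ->. assert (0 < (1 - u) * c) by (apply Rmult_lt_0_compat; lra). lra. }
  assert (HAB : pdist A B <> 0) by exact (pdist_neq0_of_cross A B C HK).
  assert (HCB : pdist C B <> 0).
  { rewrite pdist_sym. apply (pdist_neq0_of_cross B C A). now rewrite cross_cycle. }
  rewrite (pdist_lerp_ratio A B u Hu HAB).
  rewrite lerp_sym, (pdist_lerp_ratio C B (1 - v) ltac:(lra) HCB).
  replace (1 - (1 - v)) with v by ring.
  apply transversal_ratio_identity; lra.
Qed.

Theorem lemma7p1 (A B C O D t : point)
  (Hnondeg : cross A B C <> 0)
  (HO : in_interior O A B C)
  (HD : on_segment D A B) (HCOD : collinear C O D)
  (Ht : on_segment t A D) :
  let alpha := dist_line O B C / dist_line A B C in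
  let beta := dist_line O C A / dist_line B C A in
  let gamma := dist_line O A B / dist_line C A B in
  (exists F : point, on_segment F B C /\ collinear t O F) /\
  (forall F : point, on_segment F B C -> collinear t O F ->
     alpha * (pdist t A / pdist t B) + gamma * (pdist F C / pdist F B) = beta).
Proof.
  destruct HO as (a & b & c & Ha & Hb & Hc & Habc & HOe).
  change (O = bary a b c A B C) in HOe. subst O.
  destruct HD as (s & _ & HDe). change (D = lerp A B s) in HDe. subst D.
  destruct Ht as (r & Hr & Hte). change (t = lerp A (lerp A B s) r) in Hte.
  rewrite lerp_lerp in Hte. subst t.
  cbv zeta.
  destruct (bary_dist_line_ratios a b c A B C Habc (Rlt_le _ _ Ha) (Rlt_le _ _ Hb)
              (Rlt_le _ _ Hc) Hnondeg) as (-> & -> & ->).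
  pose proof (cevian_foot a b c s A B C Habc Hnondeg HCOD) as Hfoot.
  destruct (cevian_subsegment_param a b r s Ha Hb Hr Hfoot) as [Hu Hub].
  split.
  - apply transversal_meets_side; lra.
  - intros F HF HcolF. now apply transversal_ratio_sum.
Qed.
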